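(* Let $k$ be a job such that there is exactly one job $j$ for which $(j,k)$ is a red pair. Then, in the schedule produced by $1$-SORT, \[ \frac{\sigma_k+D(j,k)}{\sigma_k+D^*(j,k)}\le\frac{\nu+\nu^2+2+\frac{2}{\mu}}{\nu+\nu^2+1+\frac{1}{\mu}}. \]
   Context: Setting: single machine, jobs $J=\{1,\dots,n\}$, each job $j$ with test time $t_j\ge0$ and processing time $p_j\ge0$ (revealed only when the test is executed); each job's test must be executed before its processing part, which may start any time after the test; operations are non-preemptive and the machine does one at a time. $\sigma_j=t_j+p_j$, $m_j=\max\{t_j,p_j\}$. Standing assumption (general position): no two of the $3n$ numbers $t_j,p_j,\sigma_j$ are equal, and $\sigma_k>0$. Algorithm $1$-SORT: keep a priority queue of available operations, initially the test of every job $j$ with priority $t_j$; repeatedly remove a minimum-priority operation and execute it immediately; after executing the test of $j$, insert the processing part of $j$ with priority $p_j$. For distinct jobs $j,k$, let $d_{k,j}$ be the total amount of time during which operations of $k$ are executed before the completion time of $j$, and $D(j,k)=d_{j,k}+d_{k,j}$, evaluated for the $1$-SORT schedule; $D^*(j,k)=\min\{\sigma_j,\sigma_k\}$. Fix constants $\mu>1$ and $0<\nu<1$ with $\mu\nu>1$ and $1+\frac1\mu\le\nu+\nu^2$. A job $j$ is imbalanced if $m_j\ge\mu\min\{t_j,p_j\}$. For distinct jobs $j,k$, the ordered pair $(j,k)$ is a red pair if $j$ is imbalanced, $m_j\ge t_k\ge\nu m_j$, and $p_k\ge\nu t_k$. *)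

From HB Require Import structures.
From mathcomp Require Import all_boot all_order all_algebra.
Set Implicit Arguments. Unset Strict Implicit. Unset Printing Implicit Defensive.
Import Order.TTheory GRing.Theory Num.Theory.
Local Open Scope ring_scope.

Section OneSort.
Variables (R : realFieldType) (n : nat) (t p : 'I_n -> R).

(* An operation: (j, true) = test of job j, (j, false) = processing part of j *)
Definition op := ('I_n * bool)%type.

Definition prio (o : op) : R := if o.2 then t o.1 else p o.1.

(* a minimum-priority element of a queue (first one among ties) *)
Fixpoint pickmin (s : seq op) : option op :=
  match s with
  | [::] => None
  | x :: s' => match pickmin s' with
               | None => Some x
               | Some y => if prio y < prio x then Some y else Some x
               end
  end.

(* one step of 1-SORT: state = (queue, sequence of executed operations) *)
Definition sort_step (st : seq op * seq op) : seq op * seq op :=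
  let: (Q, Sx) := st in
  match pickmin Q with
  | None => st
  | Some o => ((if o.2 then [:: (o.1, false)] else [::]) ++ rem o Q, rcons Sx o)
  end.

(* the sequence of operations in the order executed by 1-SORT
   (executed back-to-back from time 0, without idle time) *)
Definition one_sort_seq : seq op :=
  (iter (2 * n) sort_step ([seq (j, true) | j <- enum 'I_n], [::])).2.

(* d_{k,j}: total time during which operations of k are executed before
   the completion time of j (= completion of the processing part of j) *)
Definition dd (k j : 'I_n) : R :=
  let Sx := one_sort_seq in
  \sum_(o <- take (index (j, false) Sx).+1 Sx | o.1 == k) prio o.

Definition sigma (j : 'I_n) : R := t j + p j.
Definition mm (j : 'I_n) : R := Num.max (t j) (p j).

Definition DD (j k : 'I_n) : R := dd j k + dd k j.
Definition DDstar (j k : 'I_n) : R := Num.min (sigma j) (sigma k).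

Definition imbalanced (mu : R) (j : 'I_n) : Prop :=
  mm j >= mu * Num.min (t j) (p j).

Definition red_pair (mu nu : R) (j k : 'I_n) : Prop :=
  [/\ j != k, imbalanced mu j, mm j >= t k, t k >= nu * mm j & p k >= nu * t k].

Definition general_position : Prop :=
  uniq ([seq t j | j <- enum 'I_n] ++ [seq p j | j <- enum 'I_n]
        ++ [seq sigma j | j <- enum 'I_n]).

End OneSort.

(* 1-SORT executes the operations in nondecreasing order of a key: [t_j] for the
   test of [j] and [m_j = max(t_j, p_j)] for its processing part.  A processing
   part enters the queue only after its test, whose key is at most [m_j], and its
   priority [p_j] is at most [m_j]; so nothing with a larger key can be executed
   before it.  Consequently the test of [k] counts in [d_{k,j}] only if
   [t_k <= m_j], and the processing part of [k] only if [m_k <= m_j].  For a red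
   pair [(j, k)], general position gives [m_j <> m_k]: if [m_j < m_k] then
   [D(j,k) <= sigma_j + t_k], and if [m_k < m_j] then
   [D(j,k) <= sigma_k + (t_j if t_j <= m_k else 0)].  In both cases the ratio
   bound is elementary algebra from the red-pair inequalities and
   [1 + 1/mu <= nu + nu^2]. *)

From HB Require Import structures.
From mathcomp Require Import all_boot all_order all_algebra.
From mathcomp Require Import lra.
Set Implicit Arguments. Unset Strict Implicit. Unset Printing Implicit Defensive.
Import Order.TTheory GRing.Theory Num.Theory.
Local Open Scope ring_scope.

Section OneSortOrder.
Variables (R : realFieldType) (n : nat) (t p : 'I_n -> R).
Hypotheses (t_ge0 : forall j, 0 <= t j) (p_ge0 : forall j, 0 <= p j).

Definition key (o : op n) : R := if o.2 then t o.1 else mm t p o.1.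

Definition key_le : rel (op n) := fun x y => key x <= key y.

Lemma key_le_trans : transitive key_le.
Proof. by move=> y x z; apply: le_trans. Qed.

Lemma prio_le_key o : prio t p o <= key o.
Proof. by case: o => i [] //=; rewrite /prio /key /mm le_max lexx orbT. Qed.

Lemma pickmin_eq_None s : pickmin t p s = None -> s = [::].
Proof. by case: s => //= x s; case: (pickmin t p s) => // y; case: ifP. Qed.

Lemma pickmin_min s o : pickmin t p s = Some o ->
  o \in s /\ forall y, y \in s -> prio t p o <= prio t p y.
Proof.
elim: s o => //= x s IH o.
case E: (pickmin t p s) => [y|]; last first.
  by move/pickmin_eq_None: E => -> [<-]; split=> [|z]; rewrite inE // => /eqP ->.
have [ys ys_min] := IH _ E.
case: ifP => lt_yx [<-]; split; rewrite ?inE ?ys ?eqxx ?orbT // => z.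
  by case/predU1P => [->|/ys_min //]; apply: ltW.
case/predU1P => [->|/ys_min]; first exact: lexx.
by apply: le_trans; rewrite leNgt lt_yx.
Qed.

Definition available (Sx : seq (op n)) : pred (op n) :=
  [pred x | (x \notin Sx) && (x.2 || ((x.1, true) \in Sx))].

Record sort_inv (Q Sx : seq (op n)) : Prop := SortInv {
  uniq_queue : uniq Q;
  uniq_done : uniq Sx;
  queue_available : Q =i available Sx;
  test_done : forall i, (i, false) \in Sx -> (i, true) \in Sx;
  sorted_done : sorted key_le Sx;
  key_done_le : forall x y, x \in Sx -> y \notin Sx -> key x <= key y }.

Section Step.
Variables (Q Sx : seq (op n)).
Hypothesis I : sort_inv Q Sx.

Lemma key_pickmin_le o y : pickmin t p Q = Some o -> y \in Q -> key o <= key y.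
Proof.
move=> /pickmin_min [oQ o_min] yQ.
have prio_o : prio t p o <= key y := le_trans (o_min _ yQ) (prio_le_key y).
case: o oQ prio_o {o_min} => i [] // oQ prio_o.
rewrite {1}/key /mm /= ge_max prio_o andbT.
have := oQ; rewrite (queue_available I) => /andP [_ /= testS].
have := yQ; rewrite (queue_available I) => /andP [yS _].
exact: (key_done_le I testS yS).
Qed.

Lemma key_pickmin_le_undone o y :
  pickmin t p Q = Some o -> y \notin Sx -> key o <= key y.
Proof.
move=> pick_o yS; case yQ: (y \in Q); first exact: key_pickmin_le.
move: yQ; rewrite (queue_available I) inE yS /=.
case: y yS => i [] //= yS testS.
have: (i, true) \in Q by rewrite (queue_available I) inE testS.
by move/(key_pickmin_le pick_o)/le_trans; apply; rewrite /key /mm /= le_max lexx.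
Qed.

Lemma mem_step_queue o : pickmin t p Q = Some o ->
  (if o.2 then [:: (o.1, false)] else [::]) ++ rem o Q =i available (rcons Sx o).
Proof.
move=> /pickmin_min [oQ _].
have := oQ; rewrite (queue_available I) => /andP [oS o_ready].
move=> x; rewrite mem_cat (mem_rem_uniq _ (uniq_queue I)) inE (queue_available I).
rewrite !inE -cats1 !mem_cat !inE negb_or.
case: x => i b; case: o oS o_ready {oQ} => k [] oS /= o_ready;
  case: b; case: (eqVneq i k) => [->|ik];
  rewrite /= ?inE ?xpair_eqE ?eqxx ?(negbTE ik) ?(negbTE oS) /= ?andbT ?andbF ?orbF ?orbT //.
by apply/esym/negP => /(test_done I); apply/negP.
Qed.

Lemma sort_step_inv : sort_inv (sort_step t p (Q, Sx)).1 (sort_step t p (Q, Sx)).2.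
Proof.
rewrite /sort_step; case pick_o: (pickmin t p Q) => [o|] //=.
have [oQ _] := pickmin_min pick_o.
have := oQ; rewrite (queue_available I) inE => /andP [oS o_ready].
have mem_done x : (x \in rcons Sx o) = (x == o) || (x \in Sx).
  by rewrite mem_rcons inE.
constructor.
- case: ifP => o2 /=; last exact: rem_uniq (uniq_queue I).
  rewrite rem_uniq ?(uniq_queue I) // andbT; apply/negP => /mem_rem.
  rewrite (queue_available I) inE /= => /andP [_].
  by case: o o2 oS {pick_o oQ o_ready mem_done} => i [] //= _ /negP.
- by rewrite rcons_uniq oS (uniq_done I).
- exact: mem_step_queue.
- move=> i; rewrite !mem_done => /predU1P [oE|/(test_done I) ->]; last by rewrite orbT.
  by move: o_ready; rewrite -oE /= => ->; rewrite orbT.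
- rewrite (sorted_pairwise key_le_trans) -cats1 pairwise_cat /= andbT.
  rewrite -(sorted_pairwise key_le_trans) (sorted_done I) andbT allrel1r.
  by apply/allP => y yS; apply: (key_done_le I).
- move=> x y; rewrite !mem_done negb_or => /predU1P [->|xS] /andP [_ yS].
    exact: key_pickmin_le_undone pick_o yS.
  exact: (key_done_le I).
Qed.

End Step.

Lemma queue_empty_all_done Sx : sort_inv [::] Sx -> forall o, o \in Sx.
Proof.
move=> I; have test_in i : (i, true) \in Sx.
  by apply/negPn/negP => iS; have := queue_available I (i, true); rewrite inE iS.
case=> i [] //; apply/negPn/negP => iS.
by have := queue_available I (i, false); rewrite inE iS test_in.
Qed.

Definition init_state : seq (op n) * seq (op n) :=
  ([seq (j, true) | j <- enum 'I_n], [::]).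

Lemma init_sort_inv : sort_inv init_state.1 init_state.2.
Proof.
constructor=> //=.
- by rewrite map_inj_uniq ?enum_uniq // => x y [].
- case=> i b; rewrite inE orbF /=; case: b; rewrite ?map_f ?mem_enum //.
  by apply/negbTE/negP; case/mapP.
Qed.

Lemma iter_sort_inv m :
  sort_inv (iter m (sort_step t p) init_state).1 (iter m (sort_step t p) init_state).2.
Proof.
elim: m => [|m IH]; first exact: init_sort_inv.
by rewrite iterS; case: (iter m _ _) IH => Q Sx; apply: sort_step_inv.
Qed.

Lemma iter_sort_done m :
  (forall o, o \in (iter m (sort_step t p) init_state).2) \/
  size (iter m (sort_step t p) init_state).2 = m.
Proof.
elim: m => [|m IH]; first by right.
have := iter_sort_inv m; rewrite iterS.
case: (iter m _ _) IH => Q Sx /= IH I; rewrite /sort_step.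
case pick: (pickmin t p Q) => [o|] /=; last first.
  by left; apply: queue_empty_all_done; rewrite -(pickmin_eq_None pick).
rewrite size_rcons; case: IH => [all_done|->]; [left=> x | by right].
by rewrite mem_rcons inE all_done orbT.
Qed.

Lemma one_sort_seq_props :
  [/\ uniq (one_sort_seq t p), forall o, o \in one_sort_seq t p
    & sorted key_le (one_sort_seq t p)].
Proof.
have I := iter_sort_inv (2 * n).
split; [exact: uniq_done I| |exact: sorted_done I].
case: (iter_sort_done (2 * n)) => // size_done o.
have size_ops : (size (enum {: op n}) <= size (iter (2 * n) (sort_step t p) init_state).2)%N.
  by rewrite -cardE card_prod card_ord card_bool size_done mulnC.
have [_ ->] := uniq_min_size (uniq_done I) (fun x _ => mem_enum _ x) size_ops.
by rewrite mem_enum.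
Qed.

Lemma key_le_executed_before x y :
  x \in take (index y (one_sort_seq t p)).+1 (one_sort_seq t p) -> x != y ->
  key x <= key y.
Proof.
have [_ mem_all sorted_all] := one_sort_seq_props.
rewrite in_take ?mem_all // ltnS leq_eqVlt => /predU1P [eq_xy|lt_xy] neq_xy.
  by rewrite (index_inj x (mem_all x) (mem_all y) eq_xy) eqxx in neq_xy.
by apply: (sorted_ltn_index key_le_trans sorted_all x y); rewrite ?mem_all.
Qed.

Lemma sum_prio_job (s : seq (op n)) k : uniq s ->
  \sum_(o <- s | o.1 == k) prio t p o =
  (if (k, true) \in s then t k else 0) + (if (k, false) \in s then p k else 0).
Proof.
move=> uniq_s; rewrite big_mkcond /= big_uniq //= big_mkcond /=.
rewrite (bigD1 (k, true)) //= (bigD1 (k, false)) ?xpair_eqE ?eqxx //= big1.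
  by rewrite addr0.
case=> i b /andP [ne_true ne_false]; case: ifP => // _; case: ifP => // /eqP /= ik.
by move: ik ne_true ne_false => ->; case: b => [/eqP|_ /eqP].
Qed.

Lemma ddE k j : dd t p k j =
  (if (k, true) \in take (index (j, false) (one_sort_seq t p)).+1 (one_sort_seq t p)
   then t k else 0) +
  (if (k, false) \in take (index (j, false) (one_sort_seq t p)).+1 (one_sort_seq t p)
   then p k else 0).
Proof. by have [uniq_all _ _] := one_sort_seq_props; rewrite /dd sum_prio_job ?take_uniq. Qed.

Lemma dd_le_sigma k j : dd t p k j <= sigma t p k.
Proof. by rewrite ddE /sigma lerD //; case: ifP. Qed.

Lemma dd_le_keys k j : k != j ->
  dd t p k j <= (if t k <= mm t p j then t k else 0)
                + (if mm t p k <= mm t p j then p k else 0).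
Proof.
move=> neq_kj; rewrite ddE.
apply: lerD; (case: ifP => [executed|_]; last by case: ifP).
  have /= -> // := key_le_executed_before executed.
  by rewrite xpair_eqE andbF.
have /= -> // := key_le_executed_before executed.
by rewrite xpair_eqE negb_and neq_kj.
Qed.

Lemma DD_le_max_lt j k : j != k -> mm t p j < mm t p k ->
  DD t p j k <= sigma t p j + t k.
Proof.
move=> neq_jk lt_max; rewrite /DD lerD ?dd_le_sigma //.
have := @dd_le_keys k j; rewrite eq_sym neq_jk [mm t p k <= _]leNgt lt_max addr0.
by move=> /(_ isT) /le_trans; apply; case: ifP.
Qed.

Lemma DD_le_max_gt j k : j != k -> mm t p k < mm t p j ->
  DD t p j k <= sigma t p k + (if t j <= mm t p k then t j else 0).
Proof.
move=> neq_jk lt_max; rewrite /DD addrC lerD ?dd_le_sigma //.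
by have := @dd_le_keys j k neq_jk; rewrite [mm t p j <= _]leNgt lt_max addr0.
Qed.

End OneSortOrder.

Lemma max_facts (R : realDomainType) (x y : R) :
  [/\ x <= Num.max x y, y <= Num.max x y,
      Num.max x y = x \/ Num.max x y = y & Num.min x y + Num.max x y = x + y].
Proof. by rewrite addr_min_max !le_max !lexx orbT; split=> //; case: (lerP x y); auto. Qed.

Lemma sqr_le_self (R : realDomainType) (x : R) : 0 <= x -> x <= 1 -> x ^+ 2 <= x.
Proof. by move=> x_ge0 x_le1; rewrite expr2 ler_piMr. Qed.

Lemma ratio_mul_bound_max_lt (R : realFieldType) (u nu tj pj tk pk X : R) :
  0 <= tj -> 0 <= pj -> 0 <= tk -> 0 <= pk ->
  0 < u -> u < nu -> nu < 1 -> Num.min tj pj <= u * Num.max tj pj ->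
  tk <= Num.max tj pj -> nu * Num.max tj pj <= tk -> nu * tk <= pk ->
  Num.max tj pj < Num.max tk pk -> X <= tj + pj + tk ->
  (tk + pk + X) * (nu + nu ^+ 2 + 1 + u)
    <= (nu + nu ^+ 2 + 2 + 2 * u) * (tk + pk + Num.min (tj + pj) (tk + pk)).
Proof.
move=> tj_ge0 pj_ge0 tk_ge0 pk_ge0 u_gt0 u_lt_nu nu_lt1 j_imb tk_le tk_ge pk_ge lt_max X_le.
have [tj_le_mj pj_le_mj _ min_max] := max_facts tj pj.
have [tk_le_mk pk_le_mk mk_cases _] := max_facts tk pk.
have min_ge0 : 0 <= Num.min tj pj by rewrite le_min tj_ge0 pj_ge0.
have nu2_ge0 := sqr_ge0 nu.
have nu2_le : nu ^+ 2 <= nu by apply: sqr_le_self; lra.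
have mk_pk : Num.max tk pk = pk by case: mk_cases => // mk_tk; lra.
have u_mj : u * Num.max tj pj <= nu * Num.max tj pj by apply: ler_wpM2r; lra.
have -> : Num.min (tj + pj) (tk + pk) = tj + pj by apply/min_idPl; lra.
have X_d : (tk + pk + X) * (nu + nu ^+ 2 + 1 + u)
    <= (tk + pk + tj + pj + tk) * (nu + nu ^+ 2 + 1 + u).
  by apply: ler_wpM2r; lra.
apply: le_trans X_d _.
have f1 : 0 <= (1 + u) * (tk + pk - (1 + nu) * tk) by apply: mulr_ge0; lra.
have f2 : 0 <= (1 + u) * (tj + pj - tk) by apply: mulr_ge0; lra.
have unu_ge0 : 0 <= u * nu by apply: mulr_ge0; lra.
have f3 : 0 <= tk * (1 + u + u * nu - nu ^+ 2) by apply: mulr_ge0; lra.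
lra.
Qed.

Lemma ratio_mul_bound_max_gt (R : realFieldType) (u nu tj pj tk pk X : R) :
  0 <= tj -> 0 <= pj -> 0 <= tk -> 0 <= pk ->
  0 < u -> u < nu -> nu < 1 -> 1 + u <= nu + nu ^+ 2 ->
  Num.min tj pj <= u * Num.max tj pj ->
  nu * Num.max tj pj <= tk -> nu * tk <= pk ->
  Num.max tk pk < Num.max tj pj ->
  X <= tk + pk + (if tj <= Num.max tk pk then tj else 0) ->
  (tk + pk + X) * (nu + nu ^+ 2 + 1 + u)
    <= (nu + nu ^+ 2 + 2 + 2 * u) * (tk + pk + Num.min (tj + pj) (tk + pk)).
Proof.
move=> tj_ge0 pj_ge0 tk_ge0 pk_ge0 u_gt0 u_lt_nu nu_lt1 nu_large j_imb tk_ge pk_ge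
  lt_max X_le.
have [tj_le_mj pj_le_mj mj_cases min_max] := max_facts tj pj.
have [tk_le_mk pk_le_mk _ _] := max_facts tk pk.
have min_ge0 : 0 <= Num.min tj pj by rewrite le_min tj_ge0 pj_ge0.
have nu2_ge0 := sqr_ge0 nu.
have nu2_le : nu ^+ 2 <= nu by apply: sqr_le_self; lra.
have umj_ge0 : 0 <= u * Num.max tj pj by apply: mulr_ge0; lra.
set e := (if tj <= _ then tj else 0) in X_le.
have [e_ge0 e_le sj_ge] :
    [/\ 0 <= e, e <= u * Num.max tj pj & Num.max tj pj + e <= tj + pj].
  rewrite /e; case: ifP => [tj_le|_]; last by split; lra.
  have mj_pj : Num.max tj pj = pj by case: mj_cases => // mj_tj; lra.
  by split; lra.
have ue_ge0 : 0 <= u * e by apply: mulr_ge0; lra.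
have X_d : (tk + pk + X) * (nu + nu ^+ 2 + 1 + u)
    <= (2 * (tk + pk) + e) * (nu + nu ^+ 2 + 1 + u).
  by apply: ler_wpM2r; lra.
apply: le_trans X_d _.
case: (lerP (tj + pj) (tk + pk)) => [sj_le|sk_lt].
- have g1 : (nu + nu ^+ 2) * (tk + pk) <= (nu + nu ^+ 2) * (2 * Num.max tj pj).
    by apply: ler_wpM2l; lra.
  have g2 : 0 <= Num.max tj pj * (2 + 2 * u - nu - nu ^+ 2) by apply: mulr_ge0; lra.
  have g3 : 0 <= (nu + nu ^+ 2 + 2 + 2 * u) * (tj + pj - Num.max tj pj - e).
    by apply: mulr_ge0; lra.
  lra.
- have g1 : e * (nu + nu ^+ 2 + 1 + u) <= u * Num.max tj pj * (nu + nu ^+ 2 + 1 + u).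
    by apply: ler_wpM2r; lra.
  have g2 : u * Num.max tj pj * (nu + nu ^+ 2 + 1 + u)
      <= u * Num.max tj pj * (2 * (nu + nu ^+ 2)).
    by apply: ler_wpM2l; lra.
  have g3 : nu * (nu * Num.max tj pj) <= nu * tk by apply: ler_wpM2l; lra.
  have g4 : u * (Num.max tj pj * (nu + nu ^+ 2)) <= u * (tk + pk).
    by apply: ler_wpM2l; lra.
  lra.
Qed.

Lemma general_position_max_neq (R : realFieldType) n (t p : 'I_n -> R) j k :
  general_position t p -> j != k -> mm t p j != mm t p k.
Proof.
rewrite /general_position !cat_uniq => /and5P [uniq_t disj_tp uniq_p _ _] neq_jk.
have t_inj : injective t by apply/injectiveP.
have p_inj : injective p by apply/injectiveP.
have t_neq_p i i' : t i != p i'.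
  apply: contraNneq disj_tp => eq_tp; apply/hasP; exists (p i').
    by rewrite mem_cat map_f ?mem_enum ?orbT.
  by rewrite /= -eq_tp map_f ?mem_enum.
rewrite /mm; have [_ _ [->|->] _] := max_facts (t j) (p j);
  have [_ _ [->|->] _] := max_facts (t k) (p k);
  rewrite ?t_neq_p 1?eq_sym ?t_neq_p //.
- by apply: contraNneq neq_jk => /t_inj ->.
- by apply: contraNneq neq_jk => /p_inj ->.
Qed.

Theorem mainTheorem11 (R : realFieldType) (n : nat) (t p : 'I_n -> R)
  (mu nu : R)
  (ht : forall j, 0 <= t j) (hp : forall j, 0 <= p j)
  (hgp : general_position t p)
  (hsig : forall j, 0 < sigma t p j)
  (hmu : 1 < mu) (hnu0 : 0 < nu) (hnu1 : nu < 1) (hmunu : 1 < mu * nu)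
  (hmunu2 : 1 + 1 / mu <= nu + nu ^+ 2)
  (j k : 'I_n)
  (hred : red_pair t p mu nu j k)
  (huniq : forall j', red_pair t p mu nu j' k -> j' = j) :
  (sigma t p k + DD t p j k) / (sigma t p k + DDstar t p j k)
    <= (nu + nu ^+ 2 + 2 + 2 / mu) / (nu + nu ^+ 2 + 1 + 1 / mu).
Proof.
case: hred => neq_jk j_imb tk_le tk_ge pk_ge.
have mu_gt0 : 0 < mu by lra.
have u_gt0 : 0 < mu^-1 by rewrite invr_gt0.
have u_lt_nu : mu^-1 < nu by rewrite -(ltr_pM2l mu_gt0) mulfV ?gt_eqF.
have min_le_u_max : Num.min (t j) (p j) <= mu^-1 * mm t p j.
  by rewrite mulrC ler_pdivlMr // mulrC.
rewrite div1r in hmunu2 *.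
have den_gt0 : 0 < sigma t p k + DDstar t p j k.
  by rewrite /DDstar addr_gt0 // lt_min !hsig.
rewrite ler_pdivrMr // mulrAC ler_pdivlMr; last by have := sqr_ge0 nu; lra.
case: (ltgtP (mm t p j) (mm t p k)) => [lt_max|lt_max|eq_max].
- exact: ratio_mul_bound_max_lt (ht j) (hp j) (ht k) (hp k) u_gt0 u_lt_nu hnu1
    min_le_u_max tk_le tk_ge pk_ge lt_max (DD_le_max_lt ht hp neq_jk lt_max).
- exact: ratio_mul_bound_max_gt (ht j) (hp j) (ht k) (hp k) u_gt0 u_lt_nu hnu1
    hmunu2 min_le_u_max tk_ge pk_ge lt_max (DD_le_max_gt ht hp neq_jk lt_max).
- by move: (general_position_max_neq hgp neq_jk); rewrite eq_max eqxx.
Qed.
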